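(* Let $G=(V,E)$ be a finite graph and let $\mu$ be a Bernoulli bond percolation measure on $\Omega=\{0,1\}^E$. Let $C_1,C_2$ be independent random configurations, each with law $\mu$. Consider an adaptive procedure (decision tree) $T$ which, at each step, based on the values of $C_1$ and $C_2$ on the edges revealed so far, chooses a not-yet-revealed edge $e$ and decides whether $e$ belongs to a set $S$ or to its complement $\overline S=E\setminus S$, and then reveals $C_1(e)$ and $C_2(e)$; this continues until every edge has been revealed. Let $S=S(C_1,C_2)\subseteq E$ be the resulting (random) set. Then $C_1\to_S C_2$ and $C_2\to_S C_1=C_1\to_{\overline S}C_2$ are independent, and each of them has law $\mu$.
   Context: A Bernoulli bond percolation measure $\mu$ on $\{0,1\}^E$ is a product measure in which each edge $e$ is open (value $1$) independently with probability $p_e\in[0,1]$. For configurations $C,C'\in\{0,1\}^E$ and $S\subseteq E$, $C\to_S C'$ denotes the configuration that coincides with $C$ on $S$ and with $C'$ on $\overline S=E\setminus S$. *)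

From mathcomp Require Import all_boot all_order all_algebra.
Set Implicit Arguments. Unset Strict Implicit. Unset Printing Implicit Defensive.
Import Order.TTheory GRing.Theory Num.Theory.
Local Open Scope ring_scope.

Definition config (E : finType) := {ffun E -> bool}.

Definition bern_mu (R : realFieldType) (E : finType) (p : E -> R) (C : config E) : R :=
  \prod_(e : E) (if C e then p e else 1 - p e).

(* C ->_S C' : coincides with C on S and with C' off S. *)
Definition cmix (E : finType) (S : {set E}) (C C' : config E) : config E :=
  [ffun e => if e \in S then C e else C' e].

(* Decision tree: a history records, for each revealed edge in order,
   (edge, whether it was put into S, C1(edge), C2(edge)).
   A strategy chooses, from the history, the next edge and whether it goes to S. *)
Definition history (E : finType) := seq (E * bool * bool * bool).
Definition strategy (E : finType) := history E -> E * bool.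

Fixpoint run (E : finType) (T : strategy E) (C1 C2 : config E) (n : nat) : history E :=
  match n with
  | 0 => [::]
  | n.+1 => let h := run T C1 C2 n in
            let eb := T h in
            rcons h (eb.1, eb.2, C1 eb.1, C2 eb.1)
  end.

Definition full_run (E : finType) (T : strategy E) (C1 C2 : config E) : history E :=
  run T C1 C2 #|E|.

(* The procedure always picks a not-yet-revealed edge: along every run the
   revealed edges are distinct (hence, after #|E| steps, all edges are revealed). *)
Definition valid_tree (E : finType) (T : strategy E) : Prop :=
  forall C1 C2 : config E,
    uniq (map (fun x : E * bool * bool * bool => x.1.1.1) (full_run T C1 C2)).

Definition tree_set (E : finType) (T : strategy E) (C1 C2 : config E) : {set E} :=
  [set e | has (fun x : E * bool * bool * bool => (x.1.1.1 == e) && x.1.1.2)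
               (full_run T C1 C2)].

From mathcomp Require Import all_boot all_order all_algebra.
Import Order.TTheory GRing.Theory Num.Theory.
Local Open Scope ring_scope.

(* The map (C1, C2) |-> (C1 ->_S C2, C2 ->_S C1) preserves the product measure
   mu x mu for every fixed S, edge by edge.  When S = S(C1, C2) is produced by a
   decision tree the map is still injective: from the two mixed configurations
   one replays the tree, since at each step the chosen edge and whether it lies
   in S are known, and this tells which mixed configuration carries C1 and which
   carries C2 on that edge.  An injection of a finite set is a bijection, so the
   law of the pair of mixed configurations is again mu x mu. *)

Section MixedConfigurations.
Context {E : finType}.

Lemma cmix_swap (S : {set E}) (C1 C2 : config E) :
  cmix S C2 C1 = cmix (~: S) C1 C2.
Proof. by apply/ffunP=> e; rewrite !ffunE in_setC; case: (e \in S). Qed.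

Lemma cmix_pairE (S : {set E}) (C1 C2 : config E) (e : E) :
  (cmix S C1 C2 e, cmix S C2 C1 e) =
  if e \in S then (C1 e, C2 e) else (C2 e, C1 e).
Proof. by rewrite !ffunE; case: (e \in S). Qed.

Lemma cmix_pair_inj (S : {set E}) (C1 C2 C1' C2' : config E) :
  cmix S C1 C2 = cmix S C1' C2' -> cmix S C2 C1 = cmix S C2' C1' ->
  (C1, C2) = (C1', C2').
Proof.
move=> eq1 eq2; congr pair; apply/ffunP=> e;
  have := cmix_pairE S C1 C2 e; rewrite eq1 eq2 cmix_pairE;
  by case: (e \in S) => -[].
Qed.

Lemma bern_mu_cmix (R : realFieldType) (p : E -> R) (S : {set E})
    (C1 C2 : config E) :
  bern_mu p (cmix S C1 C2) * bern_mu p (cmix S C2 C1)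
  = bern_mu p C1 * bern_mu p C2.
Proof.
rewrite /bern_mu -!big_split /=; apply: eq_bigr => e _.
by rewrite !ffunE; case: (e \in S); rewrite // mulrC.
Qed.

End MixedConfigurations.

Section DecisionTrees.
Context {E : finType} (T : strategy E).
Hypothesis hT : valid_tree T.

Definition revealed_edges (h : history E) : seq E :=
  map (fun x : E * bool * bool * bool => x.1.1.1) h.

Lemma run_prefix (C1 C2 : config E) {n m : nat} :
  (n <= m)%N -> prefix (run T C1 C2 n) (run T C1 C2 m).
Proof.
move/subnK <-; elim: (m - n)%N => [|k IH]; first exact: prefix_refl.
by rewrite addSn /= -cats1 prefix_catl.
Qed.

Lemma mem_tree_set (C1 C2 : config E) {n : nat} : (n < #|E|)%N ->
  ((T (run T C1 C2 n)).1 \in tree_set T C1 C2) = (T (run T C1 C2 n)).2.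
Proof.
move=> lt_n; have /prefixP[s run_full] := run_prefix C1 C2 lt_n.
have := hT C1 C2; rewrite /tree_set in_set /full_run run_full /= -cats1 -catA.
rewrite map_cat cat_uniq /= negb_or.
move=> /and3P[_ /andP[fresh_past _] /andP[fresh_future _]].
rewrite has_cat /= eqxx /=.
have not_revealed l : ((T (run T C1 C2 n)).1 \notin revealed_edges l) ->
    ~~ has (fun y => (y.1.1.1 == (T (run T C1 C2 n)).1) && y.1.1.2) l.
  apply: contra => /hasP[y y_l /andP[/eqP <- _]]; exact: map_f.
by rewrite (negbTE (not_revealed _ fresh_past))
  (negbTE (not_revealed _ fresh_future)) orbF.
Qed.

Definition tree_mix (u : config E * config E) : config E * config E :=
  let S := tree_set T u.1 u.2 in (cmix S u.1 u.2, cmix S u.2 u.1).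

Lemma run_tree_mix {C1 C2 C1' C2' : config E} :
  tree_mix (C1, C2) = tree_mix (C1', C2') ->
  forall n, (n <= #|E|)%N -> run T C1 C2 n = run T C1' C2' n.
Proof.
move=> [eq1 eq2]; elim=> [//|n IH] lt_n /=; rewrite -IH ?(ltnW lt_n) //.
have := cmix_pairE (tree_set T C1 C2) C1 C2 (T (run T C1 C2 n)).1.
rewrite eq1 eq2 cmix_pairE (mem_tree_set C1 C2 lt_n) IH ?(ltnW lt_n) //.
by rewrite (mem_tree_set C1' C2' lt_n); case: (T _).2 => -[-> ->].
Qed.

Lemma tree_mix_inj : injective tree_mix.
Proof.
move=> [C1 C2] [C1' C2'] eq_mix.
have eq_S : tree_set T C1 C2 = tree_set T C1' C2'.
  by rewrite /tree_set /full_run (run_tree_mix eq_mix).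
by case: eq_mix; rewrite -eq_S; apply: cmix_pair_inj.
Qed.

End DecisionTrees.

Lemma sum_fiber_inj {R : nmodType} {I : finType} {f : I -> I}
    (f_inj : injective f) (F : I -> R) (j : I) :
  \sum_(i | f i == j) F i = F (invF f_inj j).
Proof.
by apply: big_pred1 => i; rewrite -{1}(f_invF f_inj j) (inj_eq f_inj).
Qed.

(* [hp] is unused: the identity holds for arbitrary edge weights [p]. *)
Theorem mainTheorem5 (R : realFieldType) (E : finType) (p : E -> R)
  (hp : forall e, 0 <= p e <= 1) (T : strategy E) (hT : valid_tree T) :
  (forall C1 C2 : config E,
     cmix (tree_set T C1 C2) C2 C1 = cmix (~: tree_set T C1 C2) C1 C2) /\
  (forall D1 D2 : config E,
     \sum_(C1 : config E) \sum_(C2 : config E |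
          (cmix (tree_set T C1 C2) C1 C2 == D1) &&
          (cmix (tree_set T C1 C2) C2 C1 == D2))
        bern_mu p C1 * bern_mu p C2
     = bern_mu p D1 * bern_mu p D2).
Proof.
split=> [C1 C2|D1 D2]; first exact: cmix_swap.
have mix_inj := tree_mix_inj T hT.
rewrite pair_big_dep (eq_bigl (fun u => tree_mix T u == (D1, D2))) => [|[C1 C2]];
  last by rewrite xpair_eqE.
rewrite (sum_fiber_inj mix_inj (fun u => bern_mu p u.1 * bern_mu p u.2)).
have := f_invF mix_inj (D1, D2); case: (invF _ _) => C1 C2 [<- <-].
by rewrite bern_mu_cmix.
Qed.
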